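(* Let $A$ be a finite undirected multigraph (an object of $\mathbf{uGraph}$) possessing an edge $e$ such that removing $e$ from $A$ yields a disjoint union $A_1+A_2$ of two subgraphs (i.e. $e$ is a bridge), and let $A_1+A_2\hookrightarrow A$ be the inclusion. Let $\beta_j:A_j\hookrightarrow B_j$ ($j=1,2$) be $\mathcal M$-morphisms, and let $B$ be the pushout of $A\hookleftarrow A_1+A_2\xrightarrow{[\beta_1,\beta_2]}B_1+B_2$, with induced $B_1+B_2\hookrightarrow B$. Then $$\mathsf{Shift}\big(A_1+A_2\xrightarrow{[\beta_1,\beta_2]}B_1+B_2,\ \neg\exists(A_1+A_2\hookrightarrow A)\big)=\neg\exists(B_1+B_2\hookrightarrow B).$$
   Context: $\mathbf{uGraph}$: objects are triples $(E,V,i)$ of finite sets and a map $i:E\to\mathcal P^{(1,2)}(V)$ into the subsets of $V$ of size 1 or 2; morphisms are pairs of maps compatible with incidence; $\mathcal M$ is the class of component-wise injective morphisms. Conditions over an object $X$: $\mathsf{true}$, $\exists(f:X\hookrightarrow Y,c_Y)$ with $f\in\mathcal M$ and $c_Y$ a condition over $Y$ (write $\exists(f)$ for $\exists(f,\mathsf{true})$), $\neg c_X$, $c^{(1)}_X\wedge c^{(2)}_X$. The operation $\mathsf{Shift}$ (extending a condition over $X$ along $y:X\hookrightarrow Y$ in $\mathcal M$ to a condition over $Y$, such that $g\circ y\models c_X$ iff $g\models\mathsf{Shift}(y,c_X)$ for all $g\in\mathcal M$ out of $Y$) is computed recursively by: $\mathsf{Shift}(y,\mathsf{true})=\mathsf{true}$;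 $\mathsf{Shift}(y,\neg c)=\neg\mathsf{Shift}(y,c)$; $\mathsf{Shift}(y,c^{(1)}\wedge c^{(2)})=\mathsf{Shift}(y,c^{(1)})\wedge\mathsf{Shift}(y,c^{(2)})$; and $\mathsf{Shift}(y,\exists(a:X\hookrightarrow A,c_A))=\bigwedge\exists(\bar a,\mathsf{Shift}(\bar y,c_A))$, where the conjunction ranges over triples $(a':X'\hookrightarrow A,x':X\hookrightarrow X',y':X'\hookrightarrow Y)$ of $\mathcal M$-morphisms (up to isomorphism) with $a'\circ x'=a$ and $y'\circ x'=y$, where $A_{X'}$ is the pushout of $A\xleftarrow{a'}X'\xrightarrow{y'}Y$ with induced $\bar a:Y\hookrightarrow A_{X'}$ and $\bar y:A\hookrightarrow A_{X'}$. *)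

From mathcomp Require Import all_boot.
Set Implicit Arguments.
Unset Strict Implicit.
Unset Printing Implicit Defensive.

(* A finite undirected multigraph: finite edge and vertex sets and an
   incidence map into the subsets of V of size 1 or 2. *)
Record graph := Graph {
  gE : finType;
  gV : finType;
  ginc : gE -> {set gV};
  ginc_size : forall e, 0 < #|ginc e| <= 2 }.

Record mor (X Y : graph) := Mor {
  mE : gE X -> gE Y;
  mV : gV X -> gV Y;
  mor_inc : forall e, ginc (mE e) = mV @: ginc e }.

Record mmor (X Y : graph) := MMor {
  mmor_mor :> mor X Y;
  mmor_injE : injective (mE mmor_mor);
  mmor_injV : injective (mV mmor_mor) }.

Definition meq (X Y : graph) (f g : mor X Y) :=
  mE f =1 mE g /\ mV f =1 mV g.

Lemma mcomp_inc (X Y Z : graph) (g : mor Y Z) (f : mor X Y) (e : gE X) :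
  ginc (mE g (mE f e)) = (mV g \o mV f) @: ginc e.
Proof. by rewrite mor_inc mor_inc imset_comp. Qed.

Definition mcomp (X Y Z : graph) (g : mor Y Z) (f : mor X Y) : mor X Z :=
  @Mor X Z (mE g \o mE f) (mV g \o mV f) (mcomp_inc g f).

Definition is_iso (X Y : graph) (f : mor X Y) :=
  bijective (mE f) /\ bijective (mV f).

Definition is_pushout (X A Y P : graph) (f : mor X A) (g : mor X Y)
    (p : mor Y P) (q : mor A P) :=
  meq (mcomp q f) (mcomp p g) /\
  forall (Z : graph) (u : mor A Z) (v : mor Y Z),
    meq (mcomp u f) (mcomp v g) ->
    exists h : mor P Z,
      [/\ meq (mcomp h q) u, meq (mcomp h p) v &
          forall h' : mor P Z, meq (mcomp h' q) u -> meq (mcomp h' p) v ->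
            meq h' h].

Lemma gsum_size (G1 G2 : graph) (e : gE G1 + gE G2) :
  0 < #|match e with
        | inl e1 => inl @: ginc e1
        | inr e2 => inr @: ginc e2 end : {set gV G1 + gV G2}| <= 2.
Proof.
case: e => x.
  by rewrite card_imset; [exact: ginc_size | move=> a b []].
by rewrite card_imset; [exact: ginc_size | move=> a b []].
Qed.

Definition gsum (G1 G2 : graph) : graph :=
  @Graph (gE G1 + gE G2)%type (gV G1 + gV G2)%type
    (fun e => match e with
              | inl e1 => inl @: ginc e1
              | inr e2 => inr @: ginc e2 end) (@gsum_size G1 G2).

Definition sumf (T1 T2 U1 U2 : Type) (f1 : T1 -> U1) (f2 : T2 -> U2)
  (x : T1 + T2) : U1 + U2 :=
  match x with inl a => inl (f1 a) | inr b => inr (f2 b) end.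

Lemma msum_inc (A1 A2 B1 B2 : graph) (b1 : mor A1 B1) (b2 : mor A2 B2)
  (e : gE (gsum A1 A2)) :
  ginc (sumf (mE b1) (mE b2) e : gE (gsum B1 B2)) =
  sumf (mV b1) (mV b2) @: ginc e.
Proof.
case: e => x /=; rewrite mor_inc -!imset_comp; exact: eq_imset.
Qed.

Definition msum_mor (A1 A2 B1 B2 : graph) (b1 : mor A1 B1) (b2 : mor A2 B2) :
  mor (gsum A1 A2) (gsum B1 B2) :=
  @Mor (gsum A1 A2) (gsum B1 B2) _ _ (msum_inc b1 b2).

Lemma sumf_inj (T1 T2 U1 U2 : Type) (f1 : T1 -> U1) (f2 : T2 -> U2) :
  injective f1 -> injective f2 -> injective (sumf f1 f2).
Proof.
move=> i1 i2 [a|a] [b|b] //= [] h; congr (_ _); [exact: i1 | exact: i2].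
Qed.

Definition msum (A1 A2 B1 B2 : graph) (b1 : mmor A1 B1) (b2 : mmor A2 B2) :
  mmor (gsum A1 A2) (gsum B1 B2) :=
  @MMor _ _ (msum_mor b1 b2)
    (sumf_inj (@mmor_injE _ _ b1) (@mmor_injE _ _ b2))
    (sumf_inj (@mmor_injV _ _ b1) (@mmor_injV _ _ b2)).

Inductive cond : graph -> Type :=
| ctrue (X : graph) : cond X
| cex (X Y : graph) (f : mmor X Y) (c : cond Y) : cond X
| cneg (X : graph) (c : cond X) : cond X
| cand (X : graph) (c1 c2 : cond X) : cond X.

Fixpoint bigand_seq (X : graph) (s : seq (cond X)) : cond X :=
  match s with
  | [::] => ctrue X
  | [:: c] => c
  | c :: s' => cand c (bigand_seq s')
  end.

Definition bigand (X : graph) (n : nat) (F : 'I_n -> cond X) : cond X :=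
  bigand_seq [seq F i | i <- enum 'I_n].

Record triple (X A Y : graph) (a : mmor X A) (y : mmor X Y) := Triple {
  tX : graph;
  ta : mmor tX A;
  tx : mmor X tX;
  ty : mmor tX Y;
  ta_eq : meq (mcomp ta tx) a;
  ty_eq : meq (mcomp ty tx) y }.

Definition triple_iso (X A Y : graph) (a : mmor X A) (y : mmor X Y)
    (t1 t2 : triple a y) :=
  exists phi : mor (tX t1) (tX t2),
    [/\ is_iso phi, meq (mcomp (ta t2) phi) (ta t1),
        meq (mcomp phi (tx t1)) (tx t2) & meq (mcomp (ty t2) phi) (ty t1)].

(* [ShiftRel y c d] : d is a (valid result of) Shift(y, c), computed by the
   recursive clauses; in the existential clause the conjunction ranges over a
   family of triples containing exactly one representative of each
   isomorphism class of triples, with a chosen pushout for each. *)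
Inductive ShiftRel : forall (X Y : graph), mmor X Y -> cond X -> cond Y -> Prop :=
| sh_true (X Y : graph) (y : mmor X Y) : ShiftRel y (ctrue X) (ctrue Y)
| sh_neg (X Y : graph) (y : mmor X Y) c d :
    ShiftRel y c d -> ShiftRel y (cneg c) (cneg d)
| sh_and (X Y : graph) (y : mmor X Y) c1 c2 d1 d2 :
    ShiftRel y c1 d1 -> ShiftRel y c2 d2 ->
    ShiftRel y (cand c1 c2) (cand d1 d2)
| sh_ex (X Y A : graph) (y : mmor X Y) (a : mmor X A) (cA : cond A)
    (n : nat) (T : 'I_n -> triple a y) (P : 'I_n -> graph)
    (abar : forall i, mmor Y (P i)) (ybar : forall i, mmor A (P i))
    (d : forall i, cond (P i)) :
    (forall i, is_pushout (ta (T i)) (ty (T i)) (abar i) (ybar i)) ->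
    (forall t : triple a y, exists i, triple_iso t (T i)) ->
    (forall i j, triple_iso (T i) (T j) -> i = j) ->
    (forall i, ShiftRel (ybar i) cA (d i)) ->
    ShiftRel y (cex a cA) (bigand (fun i => cex (abar i) (d i))).

(* Removing the bridge e from A leaves exactly A1 + A2, and no edge of
   B1 + B2 joins the two summands.  So in a triple (a', x', y') for Shift the
   graph X' contains no preimage of e (its image under y' would join B1 and
   B2), and x' is an isomorphism.  Up to isomorphism the identity triple is
   the only one, Shift produces a single existential, and its pushout is
   isomorphic to B.  A pushout exists: B1 + B2 with the bridge re-added
   between the images of its ends. *)

From mathcomp Require Import all_boot.
Set Implicit Arguments.
Unset Strict Implicit.
Unset Printing Implicit Defensive.

Lemma inj_surj_bij (T T' : finType) (f : T -> T') :
  injective f -> (forall y, exists x, f x = y) -> bijective f.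
Proof.
move=> f_inj f_surj; apply: inj_card_bij => //.
rewrite -(card_codom f_inj); apply/subset_leq_card/subsetP=> y _.
by have [x <-] := f_surj y; exact: codom_f.
Qed.

Definition idmor (X : graph) : mor X X :=
  @Mor X X id id (fun e => esym (imset_id (ginc e))).

Definition idmmor (X : graph) : mmor X X :=
  @MMor X X (idmor X) (@inj_id (gE X)) (@inj_id (gV X)).

Lemma meq_refl (X Y : graph) (f : mor X Y) : meq f f.
Proof. by []. Qed.

Lemma meq_sym (X Y : graph) (f g : mor X Y) : meq f g -> meq g f.
Proof. by case=> fgE fgV; split=> x; rewrite ?fgE ?fgV. Qed.

Lemma meq_trans (X Y : graph) (f g h : mor X Y) : meq f g -> meq g h -> meq f h.
Proof. by case=> fgE fgV [ghE ghV]; split=> x; rewrite ?fgE ?ghE ?fgV ?ghV. Qed.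

Lemma meq_comp (X Y Z : graph) (g g' : mor Y Z) (f f' : mor X Y) :
  meq g g' -> meq f f' -> meq (mcomp g f) (mcomp g' f').
Proof. by case=> gE gV [fE fV]; split=> x /=; rewrite ?fE ?gE ?fV ?gV. Qed.

Lemma iso_of_inverse (X Y : graph) (f : mor X Y) (g : mor Y X) :
  meq (mcomp g f) (idmor X) -> meq (mcomp f g) (idmor Y) -> is_iso f.
Proof. by case=> gfE gfV [fgE fgV]; split; [exists (mE g) | exists (mV g)]. Qed.

Lemma iso_inverse (X Y : graph) (f : mor X Y) : is_iso f ->
  exists g : mor Y X, meq (mcomp g f) (idmor X) /\ meq (mcomp f g) (idmor Y).
Proof.
case=> -[gE fKE gKE] [gV fKV gKV].
have inc y : ginc (gE y) = gV @: ginc y.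
  rewrite -{2}(gKE y) mor_inc -imset_comp -[LHS]imset_id.
  by apply: eq_imset => x /=; rewrite fKV.
by exists (Mor inc).
Qed.

Lemma iso_comp (X Y Z : graph) (g : mor Y Z) (f : mor X Y) :
  is_iso g -> is_iso f -> is_iso (mcomp g f).
Proof. by case=> gE gV [fE fV]; split; exact: bij_comp. Qed.

Lemma iso_meq_cancel (X X' Y : graph) (x : mor X X') (u v : mor X' Y) :
  is_iso x -> meq (mcomp u x) (mcomp v x) -> meq u v.
Proof.
case=> -[xiE _ xKE] [xiV _ xKV] [uvE uvV].
by split=> w; [rewrite -(xKE w); exact: uvE | rewrite -(xKV w); exact: uvV].
Qed.

Lemma pushout_endo_id (X A Y P : graph) (f : mor X A) (g : mor X Y)
    (p : mor Y P) (q : mor A P) (h : mor P P) :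
  is_pushout f g p q ->
  meq (mcomp h q) q -> meq (mcomp h p) p -> meq h (idmor P).
Proof.
case=> comm /(_ P q p comm) [m [_ _ m_uniq]] hq hp.
exact: meq_trans (m_uniq h hq hp) (meq_sym (m_uniq (idmor P) _ _)).
Qed.

Lemma pushout_unique (X A Y P P' : graph) (f : mor X A) (g : mor X Y)
    (p : mor Y P) (q : mor A P) (p' : mor Y P') (q' : mor A P') :
  is_pushout f g p q -> is_pushout f g p' q' ->
  exists phi : mor P P', is_iso phi /\ meq (mcomp phi p) p'.
Proof.
move=> po po'; have [comm UP] := po; have [comm' UP'] := po'.
have [h [hq hp _]] := UP P' q' p' comm'.
have [k [kq kp _]] := UP' P q p comm.
exists h; split=> //; apply: (@iso_of_inverse _ _ h k).
  apply: (pushout_endo_id po).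
    exact: meq_trans (meq_comp (meq_refl k) hq) kq.
  exact: meq_trans (meq_comp (meq_refl k) hp) kp.
apply: (pushout_endo_id po').
  exact: meq_trans (meq_comp (meq_refl h) kq) hq.
exact: meq_trans (meq_comp (meq_refl h) kp) hp.
Qed.

Lemma pushout_precomp_iso (X X' A Y P : graph) (x : mor X X')
    (f' : mor X' A) (g' : mor X' Y) (f : mor X A) (g : mor X Y)
    (p : mor Y P) (q : mor A P) :
  is_iso x -> meq (mcomp f' x) f -> meq (mcomp g' x) g ->
  is_pushout f' g' p q -> is_pushout f g p q.
Proof.
move=> x_iso f'x g'x [comm' UP']; split.
  apply: meq_trans (meq_comp (meq_refl q) (meq_sym f'x)) _.
  exact: meq_trans (meq_comp comm' (meq_refl x)) (meq_comp (meq_refl p) g'x).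
move=> Z u v uv; apply: UP'; apply: (iso_meq_cancel x_iso).
apply: meq_trans (meq_comp (meq_refl u) f'x) _.
exact: meq_trans uv (meq_comp (meq_refl v) (meq_sym g'x)).
Qed.

Definition id_triple (X A Y : graph) (a : mmor X A) (y : mmor X Y) : triple a y :=
  @Triple X A Y a y X a (idmmor X) y (meq_refl a) (meq_refl y).

Lemma triple_iso_of_iso (X A Y : graph) (a : mmor X A) (y : mmor X Y)
    (t1 t2 : triple a y) :
  is_iso (tx t1) -> is_iso (tx t2) -> triple_iso t1 t2.
Proof.
move=> iso1 iso2; have [g [[gxE gxV] xg]] := iso_inverse iso1.
have gx : meq (mcomp (mcomp (tx t2) g) (tx t1)) (tx t2).
  by split=> w /=; [move: (gxE w) | move: (gxV w)] => /= ->.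
have through_x1 Z (u v : mor (tX t1) Z) :
    meq (mcomp u (tx t1)) (mcomp v (tx t1)) -> meq u v.
  exact: iso_meq_cancel.
exists (mcomp (tx t2) g); split=> //.
- by apply: iso_comp iso2 _; exact: iso_of_inverse xg (conj gxE gxV).
- apply: through_x1; apply: meq_trans (meq_comp (meq_refl (ta t2)) gx) _.
  exact: meq_trans (ta_eq t2) (meq_sym (ta_eq t1)).
- apply: through_x1; apply: meq_trans (meq_comp (meq_refl (ty t2)) gx) _.
  exact: meq_trans (ty_eq t2) (meq_sym (ty_eq t1)).
Qed.

Lemma gsum_edge_not_across (B1 B2 : graph) (f : gE (gsum B1 B2))
    (b1 : gV B1) (b2 : gV B2) :
  inl b1 \in ginc f -> inr b2 \notin ginc f.
Proof. by case: f => f /= /imsetP [x _ //] _; apply/imsetP => -[]. Qed.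

Definition gadd_edge_inc (G : graph) (u v : gV G) (f : option (gE G)) :=
  if f is Some f then ginc f else [set u; v].

Lemma gadd_edge_inc_size (G : graph) (u v : gV G) (f : option (gE G)) :
  0 < #|gadd_edge_inc u v f| <= 2.
Proof. by case: f => [f|] /=; [exact: ginc_size | rewrite cards2; case: eqP]. Qed.

Definition gadd_edge (G : graph) (u v : gV G) : graph :=
  @Graph (option (gE G)) (gV G) _ (gadd_edge_inc_size u v).

Definition gadd_edge_mor (G : graph) (u v : gV G) : mor G (gadd_edge u v) :=
  @Mor G (gadd_edge u v) Some id (fun f => esym (imset_id (ginc f))).

Definition gadd_edge_in (G : graph) (u v : gV G) : mmor G (gadd_edge u v) :=
  @MMor _ _ (gadd_edge_mor u v) (@Some_inj _) (@inj_id (gV G)).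

(* Small inversions: matching on the condition avoids the dependent equalities
   on the graph index that [inversion] would need an axiom to eliminate. *)
Lemma ShiftRel_negE (X Y : graph) (y : mmor X Y) (c : cond X) (d : cond Y) :
  ShiftRel y (cneg c) d -> exists2 d', d = cneg d' & ShiftRel y c d'.
Proof.
suff inv X0 Y0 (y0 : mmor X0 Y0) c0 d0 : ShiftRel y0 c0 d0 ->
  match c0 in cond X1 return mmor X1 Y0 -> Prop with
  | cneg _ c' => fun y1 => exists2 d', d0 = cneg d' & ShiftRel y1 c' d'
  | _ => fun _ => True end y0 by exact: inv.
by case=> //= *; eexists; [reflexivity | eassumption].
Qed.

Lemma ShiftRel_trueE (X Y : graph) (y : mmor X Y) (d : cond Y) :
  ShiftRel y (ctrue X) d -> d = ctrue Y.
Proof.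
suff inv X0 Y0 (y0 : mmor X0 Y0) c0 d0 : ShiftRel y0 c0 d0 ->
  if c0 is ctrue _ then d0 = ctrue Y0 else True by exact: inv.
by case.
Qed.

Lemma ShiftRel_exE (X Y A : graph) (y : mmor X Y) (a : mmor X A) (cA : cond A)
    (d : cond Y) :
  ShiftRel y (cex a cA) d ->
  exists n (T : 'I_n -> triple a y) (P : 'I_n -> graph)
    (abar : forall i, mmor Y (P i)) (ybar : forall i, mmor A (P i))
    (dA : forall i, cond (P i)),
  [/\ forall i, is_pushout (ta (T i)) (ty (T i)) (abar i) (ybar i),
      forall t : triple a y, exists i, triple_iso t (T i),
      forall i j, triple_iso (T i) (T j) -> i = j,
      forall i, ShiftRel (ybar i) cA (dA i) &
      d = bigand (fun i => cex (abar i) (dA i))].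
Proof.
suff inv X0 Y0 (y0 : mmor X0 Y0) c0 d0 : ShiftRel y0 c0 d0 ->
  match c0 in cond X1 return mmor X1 Y0 -> Prop with
  | cex _ A0 a0 cA0 => fun y1 =>
    exists n (T : 'I_n -> triple a0 y1) (P : 'I_n -> graph)
      (abar : forall i, mmor Y0 (P i)) (ybar : forall i, mmor A0 (P i))
      (dA : forall i, cond (P i)),
    [/\ forall i, is_pushout (ta (T i)) (ty (T i)) (abar i) (ybar i),
        forall t : triple a0 y1, exists i, triple_iso t (T i),
        forall i j, triple_iso (T i) (T j) -> i = j,
        forall i, ShiftRel (ybar i) cA0 (dA i) &
        d0 = bigand (fun i => cex (abar i) (dA i))]
  | _ => fun _ => True end y0 by exact: inv.
by case=> //= *; do 6 eexists; split; first [eassumption | reflexivity].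
Qed.

Lemma bigand1 (X : graph) (F : 'I_1 -> cond X) : bigand F = F ord0.
Proof. by rewrite /bigand enum_ordSl enum_ord0. Qed.

Lemma transversal_total_rel_size (T : Type) (R : T -> T -> Prop) n
    (F : 'I_n -> T) (t0 : T) :
  (forall s t, R s t) -> (forall t, exists i, R t (F i)) ->
  (forall i j, R (F i) (F j) -> i = j) -> n = 1.
Proof.
move=> R_total F_onto F_inj; have [[i0 lt_i0n] _] := F_onto t0.
case: n F F_onto F_inj i0 lt_i0n => [|[|n]] F _ F_inj // _ _.
by have /(congr1 val) := F_inj ord0 (lift ord0 ord0) (R_total _ _).
Qed.

Section Bridge.

Variables (A1 A2 A B1 B2 : graph) (iota : mmor (gsum A1 A2) A) (e : gE A).
Variable iotaV_inv : gV A -> gV (gsum A1 A2).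
Hypotheses (iotaVK : cancel (mV iota) iotaV_inv)
  (iotaV_invK : cancel iotaV_inv (mV iota)).
Hypothesis Hedge : forall e' : gE A, e' != e <-> exists e0, mE iota e0 = e'.
Variables (v1 : gV A1) (v2 : gV A2).
Hypothesis Hbridge : ginc e = [set mV iota (inl v1); mV iota (inr v2)].
Variables (beta1 : mmor A1 B1) (beta2 : mmor A2 B2).

Let beta := msum beta1 beta2.

Lemma triple_ta_not_bridge (t : triple iota beta) (w : gE (tX t)) :
  mE (ta t) w != e.
Proof.
have [_ taV] := ta_eq t; have [_ tyV] := ty_eq t.
apply/eqP => taw.
have in_w (x : gV (gsum A1 A2)) : mV iota x \in ginc e -> mV (tx t) x \in ginc w.
  by rewrite -taw mor_inc -(taV x) /= mem_imset //; exact: mmor_injV.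
have in_yw (x : gV (gsum A1 A2)) : mV iota x \in ginc e ->
    mV beta x \in ginc (mE (ty t) w).
  by move/in_w => xw; rewrite mor_inc -(tyV x) /= imset_f.
have [/in_yw left_end /in_yw right_end] :
    mV iota (inl v1) \in ginc e /\ mV iota (inr v2) \in ginc e.
  by rewrite Hbridge set21 set22.
by move/gsum_edge_not_across/negP: left_end; apply; exact: right_end.
Qed.

Lemma triple_tx_iso (t : triple iota beta) : is_iso (tx t).
Proof.
have [taE taV] := ta_eq t.
have ta_injE := @mmor_injE _ _ (ta t); have ta_injV := @mmor_injV _ _ (ta t).
split; apply: inj_surj_bij.
- exact: mmor_injE.
- move=> w; have /Hedge [e0 iota_e0] := triple_ta_not_bridge w.
  by exists e0; apply: ta_injE; rewrite -iota_e0 -(taE e0).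
- exact: mmor_injV.
- move=> w; exists (iotaV_inv (mV (ta t) w)); apply: ta_injV.
  by rewrite -[RHS]iotaV_invK -(taV (iotaV_inv _)).
Qed.

Lemma bridge_triples_iso (t1 t2 : triple iota beta) : triple_iso t1 t2.
Proof. exact: triple_iso_of_iso (triple_tx_iso t1) (triple_tx_iso t2). Qed.

Let P := gadd_edge (inl (mV beta1 v1) : gV (gsum B1 B2)) (inr (mV beta2 v2)).

Definition bridge_pushE (e' : gE A) : gE P :=
  if [pick e0 | mE iota e0 == e'] is Some e0 then Some (mE beta e0) else None.

Lemma bridge_pushE_iota (e0 : gE (gsum A1 A2)) :
  bridge_pushE (mE iota e0) = Some (mE beta e0).
Proof.
rewrite /bridge_pushE; case: pickP => [e1 /eqP /(@mmor_injE _ _ iota) -> //|].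
by move/(_ e0); rewrite eqxx.
Qed.

Lemma bridge_pushE_bridge : bridge_pushE e = None.
Proof.
rewrite /bridge_pushE; case: pickP => [e0 /eqP iota_e0|//].
by have := proj2 (Hedge e) (ex_intro _ e0 iota_e0); rewrite eqxx.
Qed.

Lemma bridge_push_inc (e' : gE A) :
  ginc (bridge_pushE e') = (mV beta \o iotaV_inv) @: ginc e'.
Proof.
case: (eqVneq e' e) => [->|/Hedge [e0 <-]].
  by rewrite bridge_pushE_bridge Hbridge imsetU1 imset_set1 /= !iotaVK.
rewrite bridge_pushE_iota -[LHS]/(ginc (mE beta e0)) !mor_inc -imset_comp.
by apply: eq_imset => x /=; rewrite iotaVK.
Qed.

Lemma bridge_pushE_inj : injective bridge_pushE.
Proof.
move=> x1 x2; case: (eqVneq x1 e) => [->|/Hedge [e1 <-]];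
  case: (eqVneq x2 e) => [->|/Hedge [e2 <-]];
  rewrite ?bridge_pushE_bridge ?bridge_pushE_iota // => -[].
by move/(@mmor_injE _ _ beta) ->.
Qed.

Definition bridge_push : mmor A P :=
  @MMor _ _ (Mor bridge_push_inc) bridge_pushE_inj
    (inj_comp (@mmor_injV _ _ beta) (can_inj iotaV_invK)).

Lemma bridge_pushout : is_pushout iota beta (gadd_edge_in _ _) bridge_push.
Proof.
split; first by split=> x /=; rewrite ?bridge_pushE_iota ?iotaVK.
move=> Z u v [uvE uvV].
pose hE (f : gE P) := if f is Some f then mE v f else mE u e.
have h_inc f : ginc (hE f) = mV v @: ginc f.
  case: f => [f|] /=; first exact: mor_inc.
  rewrite mor_inc Hbridge !imsetU1 !imset_set1.
  by move: (uvV (inl v1)) (uvV (inr v2)) => /= -> ->.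
exists (Mor h_inc); split.
- split=> w /=; last by move: (uvV (iotaV_inv w)) => /= <-; rewrite iotaV_invK.
  case: (eqVneq w e) => [->|/Hedge [e0 <-]]; first by rewrite bridge_pushE_bridge.
  by rewrite bridge_pushE_iota; move: (uvE e0) => /= ->.
- by [].
- move=> h [hE_u hV_u] [hE_v hV_v]; split=> [[f|]|w] /=; last exact: hV_v.
    exact: hE_v.
  by rewrite -bridge_pushE_bridge; apply: hE_u.
Qed.

Lemma ShiftRel_bridge_exists : exists d, ShiftRel beta (cex iota (ctrue A)) d.
Proof.
eexists; apply: (@sh_ex _ _ _ _ _ _ 1 (fun _ => id_triple iota beta) (fun _ => P)
  (fun _ => gadd_edge_in _ _) (fun _ => bridge_push) (fun _ => ctrue P)).
- by move=> _; exact: bridge_pushout.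
- by move=> t; exists ord0; exact: bridge_triples_iso.
- by move=> i j _; rewrite (ord1 i) (ord1 j).
- by move=> _; exact: sh_true.
Qed.

Lemma ShiftRel_bridge_shape (d : cond (gsum B1 B2)) :
  ShiftRel beta (cex iota (ctrue A)) d ->
  exists (Q : graph) (abar : mmor (gsum B1 B2) Q) (ybar : mor A Q),
    is_pushout iota beta abar ybar /\ d = cex abar (ctrue Q).
Proof.
case/ShiftRel_exE => n [T [Q [abar [ybar [dA [po T_onto T_inj dA_true ->]]]]]].
have n1 := transversal_total_rel_size (id_triple iota beta) bridge_triples_iso
  T_onto T_inj.
subst n; rewrite bigand1 (ShiftRel_trueE (dA_true ord0)).
exists (Q ord0), (abar ord0), (ybar ord0); split=> //.
exact: pushout_precomp_iso (triple_tx_iso _) (ta_eq _) (ty_eq _) (po ord0).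
Qed.

End Bridge.

Theorem mainTheorem6
  (A1 A2 A B1 B2 B : graph)
  (* A1 + A2 -> A is the inclusion of A minus the bridge e *)
  (iota : mmor (gsum A1 A2) A) (e : gE A)
  (Hvert : bijective (mV iota))
  (Hedge : forall e' : gE A, e' != e <-> exists e0, mE iota e0 = e')
  (v1 : gV A1) (v2 : gV A2)
  (Hbridge : ginc e = [set mV iota (inl v1); mV iota (inr v2)])
  (beta1 : mmor A1 B1) (beta2 : mmor A2 B2)
  (* B is the pushout of A <- A1 + A2 -> B1 + B2, induced p : B1 + B2 -> B *)
  (p : mmor (gsum B1 B2) B) (q : mor A B)
  (Hpo : is_pushout iota (msum beta1 beta2) p q) :
  (exists d, ShiftRel (msum beta1 beta2) (cneg (cex iota (ctrue A))) d) /\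
  (forall d, ShiftRel (msum beta1 beta2) (cneg (cex iota (ctrue A))) d ->
     exists (P : graph) (abar : mmor (gsum B1 B2) P) (phi : mor P B),
       [/\ is_iso phi, meq (mcomp phi abar) p &
           d = cneg (cex abar (ctrue P))]).
Proof.
have [iotaV_inv iotaVK iotaV_invK] := Hvert.
split.
  have [d Hd] := ShiftRel_bridge_exists iotaVK iotaV_invK Hedge Hbridge beta1 beta2.
  by exists (cneg d); exact: sh_neg.
move=> d /ShiftRel_negE [d' ->].
case/(ShiftRel_bridge_shape iotaV_invK Hedge Hbridge) => P [abar [ybar [Hpo' ->]]].
have [phi [phi_iso phi_abar]] := pushout_unique Hpo' Hpo.
by exists P, abar, phi.
Qed.
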